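(* For every $\ell\ge0$ and every $\mathbf z=(z_1,\dots,z_{K-1})\in[0,1)^{K-1}$ at which $1-z_\kappa\zeta_+(z_1,\dots,z_\kappa)\neq0$ for all $\kappa=1,\dots,K-1$, $$G_\ell(z_1,\dots,z_{K-1})=(1-r)\,\zeta_-(z_1,\dots,z_{K-1})^{\ell}\prod_{\kappa=1}^{K-1}\frac{1-z_\kappa\,\zeta_+(z_1,\dots,z_{\kappa-1})}{1-z_\kappa\,\zeta_+(z_1,\dots,z_\kappa)}.$$ For $K=2$ this reads $G_\ell(z_1)=(1-r)\zeta_-(z_1)^\ell(1-z_1)/(1-z_1\zeta_+(z_1))$.
   Context: Fix integers $c\ge 1$, $K\ge 2$ and reals $r_1,\dots,r_K>0$ with $r=\sum_{k=1}^K r_k<1$ (here $r_k=\lambda_k/(c\mu)$ for an M/M/$c$ queue with $K$ non-preemptive priority levels, level 1 the highest, Poisson arrival rates $\lambda_k$ and common exponential service rate $\mu$). Write $\sigma_k=\sum_{j=1}^k r_j$ ($\sigma_0=0$, $\sigma_K=r$), $\mathbf e_\kappa$ for the standard unit vectors of $\mathbb Z^K$, $\delta_{ij}$ for the Kronecker delta. Consider the equations for $(p_{\mathbf n})_{\mathbf n\in\mathbb N_0^K}$, with the convention $p_{\mathbf n}=0$ if some component of $\mathbf n$ is negative: $$(1+r)p_{\mathbf n}=\Big(\prod_{j=1}^K\delta_{0n_j}\Big)p_{\mathbf n}+\sum_{\kappa=1}^K\Big[r_\kappa p_{\mathbf n-\mathbf e_\kappa}+\Big(\prod_{j=1}^{\kappa-1}\delta_{0n_j}\Big)p_{\mathbf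 n+\mathbf e_\kappa}\Big],\quad \mathbf n\in\mathbb N_0^K .$$ These are the stationary balance equations for the states in which all $c$ servers are busy and $n_\kappa$ clients of level $\kappa$ wait in the queue; their nonnegative summable solutions form a one-dimensional cone, and $P$ denotes the unique solution with $\sum_{\mathbf n}P(\mathbf n)=1$. For $\kappa=0,1,\dots,K-1$ and $z_1,\dots,z_\kappa\in[0,1]$ define $\beta(z_1,\dots,z_\kappa)=\sum_{k=1}^\kappa z_k r_{K+1-k}$ (so $\beta()=0$) and $$\zeta_\pm(z_1,\dots,z_\kappa)=\tfrac12\Big[1+r-\beta\pm\sqrt{(1+r-\beta)^2-4\sigma_{K-\kappa}}\Big],\quad \beta=\beta(z_1,\dots,z_\kappa),$$ the two real roots of $\zeta^2-(1+r-\beta)\zeta+\sigma_{K-\kappa}=0$; in particular $\zeta_+()=1$, $\zeta_-()=r$. For $\ell\ge0$ define $$G_\ell(z_1,\dots,z_{K-1})=\sum_{n_2,\dots,n_K\ge0}P(\ell,n_2,\dots,n_K)\prod_{j=2}^K z_{K+1-j}^{\,n_j},$$ so $z_1$ is paired with the lowest level $K$ and $z_{K-1}$ with level $2$. *)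

From HB Require Import structures.
From mathcomp Require Import all_boot all_order all_algebra.
From mathcomp Require Import all_classical all_reals all_analysis.
Set Implicit Arguments. Unset Strict Implicit. Unset Printing Implicit Defensive.
Import Order.TTheory GRing.Theory Num.Theory.
Local Open Scope ring_scope.
Local Open Scope classical_set_scope.

(* A state n = (n_1,...,n_K) in N_0^K is a finite function 'I_K -> nat;
   level k (1 <= k <= K) is stored at index k-1. *)
Definition lev (K : nat) (n : {ffun 'I_K -> nat}) (k : nat) : nat :=
  odflt 0%N (omap n (insub k.-1 : option 'I_K)).

(* n - e_{j+1} (only used when n j > 0) and n + e_{j+1}, for j : 'I_K *)
Definition decr (K : nat) (n : {ffun 'I_K -> nat}) (j : 'I_K) : {ffun 'I_K -> nat} :=
  [ffun i => if i == j then (n i).-1 else n i].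
Definition incr (K : nat) (n : {ffun 'I_K -> nat}) (j : 'I_K) : {ffun 'I_K -> nat} :=
  [ffun i => if i == j then (n i).+1 else n i].

Section Defs.
Variable R : realType.

Definition sigma (r : nat -> R) (m : nat) : R := \sum_(1 <= j < m.+1) r j.

(* balance equations; p(n - e_kappa) := 0 when n_kappa = 0 *)
Definition balance (K : nat) (r : nat -> R) (p : {ffun 'I_K -> nat} -> R) : Prop :=
  forall n : {ffun 'I_K -> nat},
    (1 + sigma r K) * p n =
      (if [forall i : 'I_K, n i == 0%N] then p n else 0)
      + \sum_(j < K)
          (r j.+1 * (if n j == 0%N then 0 else p (decr n j))
           + (if [forall i : 'I_K, (i < j)%N ==> (n i == 0%N)]
              then p (incr n j) else 0)).

Definition beta (r : nat -> R) (K : nat) (z : nat -> R) (kappa : nat) : R :=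
  \sum_(1 <= k < kappa.+1) z k * r (K.+1 - k)%N.

Definition bb (r : nat -> R) (K : nat) (z : nat -> R) (kappa : nat) : R :=
  1 + sigma r K - beta r K z kappa.

Definition zeta_plus (r : nat -> R) (K : nat) (z : nat -> R) (kappa : nat) : R :=
  (bb r K z kappa + Num.sqrt (bb r K z kappa ^+ 2 - 4 * sigma r (K - kappa)%N)) / 2.
Definition zeta_minus (r : nat -> R) (K : nat) (z : nat -> R) (kappa : nat) : R :=
  (bb r K z kappa - Num.sqrt (bb r K z kappa ^+ 2 - 4 * sigma r (K - kappa)%N)) / 2.

Definition Gfun (K : nat) (P : {ffun 'I_K -> nat} -> R) (z : nat -> R) (l : nat)
  : \bar R :=
  esum [set n : {ffun 'I_K -> nat} | lev n 1 = l]
    (fun n => (P n * \prod_(2 <= j < K.+1) z (K.+1 - j)%N ^+ lev n j)%:E).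

End Defs.

From HB Require Import structures.
From mathcomp Require Import all_boot all_order all_algebra.
From mathcomp Require Import all_classical all_reals all_analysis.
From mathcomp Require Import ring lra zify.
Set Implicit Arguments. Unset Strict Implicit. Unset Printing Implicit Defensive.
Import Order.TTheory GRing.Theory Num.Theory numFieldNormedType.Exports.
Local Open Scope ring_scope.
Local Open Scope classical_set_scope.

(* Fix t in 1..K, give the levels 1..t the variable 1 and level i > t the variable
   z_(K+1-i).  Grouping the states by the number a of clients waiting in levels 1..t,
   the weighted masses g_t(a) obey, after summing the balance equations, the recurrence
   g_t(a+2) = (1 + r - beta) g_t(a+1) - sigma_t g_t(a), whose characteristic roots are
   zeta_-(z_1..z_(K-t)) and zeta_+(z_1..z_(K-t)).  Since zeta_+ >= 1 while g_t is
   nonnegative and summable, g_t(a) = zeta_-^a g_t(0).  The balance equations at a = 0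
   for t and for t+1 share the departures from the levels above t+1; eliminating them
   gives g_t(0) (1 - z_(K-t) zeta_+(z_1..z_(K-t)))
       = g_(t+1)(0) (1 - z_(K-t) zeta_+(z_1..z_(K-t-1))).
   Finally g_K(0) = P(0) = 1 - r by normalization, and G_l = g_1(l). *)

Section EsumFacts.
Variables (R : realType) (T : choiceType).

Lemma esumZl (S : set T) (a : T -> \bar R) (c : R) : 0 <= c ->
  (forall i, (0 <= a i)%E) ->
  esum S (fun i => (c%:E * a i)%E) = (c%:E * esum S a)%E.
Proof.
move=> c0 a0; rewrite /esum -ereal_supZl //; last first.
  by apply/set0P; exists (\sum_(x \in set0) a x)%R; exists set0 => //; exact: fsets_set0.
congr ereal_sup; apply/seteqP; split.
- move=> _ [A [finA AS] <-]; exists (\sum_(x \in A) a x)%R; first by exists A.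
  by rewrite !fsbig_finite // ge0_sume_distrr.
- move=> _ [_ [A [finA AS] <-] <-]; exists A => //.
  by rewrite !fsbig_finite // ge0_sume_distrr.
Qed.

Lemma esum_delta (m : T) (e : \bar R) : (0 <= e)%E ->
  esum [set: T] (fun n => if n == m then e else 0%E) = e.
Proof.
move=> e0; rewrite (esumID [set m]); last by move=> n _; case: (n == m).
rewrite [X in (_ + X)%E]esum1 ?adde0; last first.
  by move=> n [_ /= nm]; case: eqP => // /nm.
by rewrite setTI esum_set1 ?eqxx.
Qed.

End EsumFacts.

Section States.
Variable K : nat.
Local Notation state := {ffun 'I_K -> nat}.

Definition state0 : state := [ffun => 0%N].

(* A service completion takes a client of level [j+1] only if levels [1..j] are empty. *)
Definition lower_empty (n : state) (j : 'I_K) : bool :=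
  [forall i : 'I_K, (i < j)%N ==> (n i == 0%N)].

Definition prefix_size (t : nat) (n : state) : nat := (\sum_(i < K | (i < t)%N) n i)%N.

Definition monomial (R : pzSemiRingType) (x : 'I_K -> R) (n : state) : R :=
  \prod_(i < K) x i ^+ n i.

Lemma incrE (n : state) j i : incr n j i = if i == j then (n i).+1 else n i.
Proof. by rewrite ffunE. Qed.

Lemma decr_incr (n : state) j : decr (incr n j) j = n.
Proof. by apply/ffunP => i; rewrite !ffunE; case: (i == j). Qed.

Lemma incr_decr (n : state) j : n j != 0%N -> incr (decr n j) j = n.
Proof.
move=> nj; apply/ffunP => i; rewrite !ffunE; case: eqP => [->|//].
by rewrite prednK // lt0n.
Qed.

Lemma incr_inj j : injective (fun n : state => incr n j).
Proof. by move=> n m /(congr1 (fun u => decr u j)); rewrite !decr_incr. Qed.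

Lemma lev_ord (n : state) (i : 'I_K) : lev n i.+1 = n i.
Proof.
rewrite /lev /=; case: insubP => [j _ ej|]; last by move=> /negP []; exact: ltn_ord.
by rewrite /= (_ : j = i) //; apply: val_inj; rewrite ej.
Qed.

Lemma all0_state0 (n : state) : [forall i, n i == 0%N] = (n == state0).
Proof.
apply/forallP/eqP => [h|-> i]; last by rewrite ffunE.
by apply/ffunP => i; rewrite ffunE; apply/eqP.
Qed.

Lemma lower_empty_incr (n : state) j : lower_empty (incr n j) j = lower_empty n j.
Proof.
rewrite /lower_empty; apply: eq_forallb => i; rewrite incrE.
by case: (eqVneq i j) => [->|_]; rewrite ?ltnn.
Qed.

Lemma prefix_size_incr t (n : state) j :
  prefix_size t (incr n j) = (prefix_size t n + (j < t))%N.
Proof.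
rewrite /prefix_size; case: (ltnP j t) => jt.
  rewrite (bigD1 j) //= [in RHS](bigD1 j) //= incrE eqxx.
  rewrite (eq_bigr (fun i => n i)); first by rewrite addSn addn1.
  by move=> i /andP[_ ij]; rewrite incrE (negPf ij).
rewrite addn0; apply: eq_bigr => i it; rewrite incrE; case: eqP => // ij.
by move: it; rewrite ij ltnNge jt.
Qed.

Lemma prefix_size_state0 t : prefix_size t state0 = 0%N.
Proof. by rewrite /prefix_size big1 // => i _; rewrite ffunE. Qed.

Lemma prefix_sizeS t (tK : (t < K)%N) (n : state) :
  prefix_size t.+1 n = (prefix_size t n + n (Ordinal tK))%N.
Proof.
rewrite /prefix_size (bigD1 (Ordinal tK)) //= addnC; congr (_ + _)%N.
by apply: eq_bigl => i; rewrite -val_eqE /= ltnS andbC -ltn_neqAle.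
Qed.

Lemma prefix_size_eq0 t (n : state) :
  prefix_size t n = 0%N -> forall i : 'I_K, (i < t)%N -> n i = 0%N.
Proof.
move=> h i it; move: h; rewrite /prefix_size (bigD1 i) //= => /eqP.
by rewrite addn_eq0 => /andP[/eqP -> _].
Qed.

Lemma prefix_size_neq0 t (n : state) :
  prefix_size t n != 0%N -> exists2 i : 'I_K, (i < t)%N & n i != 0%N.
Proof.
move=> tn; case: (pickP (fun i : 'I_K => (i < t)%N && (n i != 0%N))) => [i /andP[]|none].
  by exists i.
move: tn; rewrite /prefix_size big1 // => i it; move: (none i); rewrite it /=.
by move/negbFE/eqP.
Qed.

(* Exactly one of the first t levels, the first occupied one, has [lower_empty]. *)
Lemma sum_first_occupied (R : realType) t (n : state) (e : \bar R) :
  prefix_size t n != 0%N ->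
  (\sum_(j < K | (j < t)%N) (if (n j != 0%N) && lower_empty n j then e else 0%E))%R = e.
Proof.
move=> /prefix_size_neq0[i0 i0t ni0].
case: (@arg_minnP _ i0 (fun i : 'I_K => (i < t)%N && (n i != 0%N)) val); first by rewrite i0t ni0.
move=> j0 /andP[j0t nj0] minj0.
have first_j0 (j : 'I_K) : (j < t)%N -> ((n j != 0%N) && lower_empty n j) = (j == j0).
  move=> jt; case: (eqVneq j j0) => [->|jj0].
    rewrite nj0 /=; apply/forallP => i; apply/implyP => ij0.
    apply/negPn/negP => ni; have := minj0 i; rewrite ni (ltn_trans ij0 j0t) /=.
    by move=> /(_ isT); rewrite leqNgt ij0.
  apply/negbTE/negP => /andP[nj /forallP/(_ j0)/implyP cj].
  have := minj0 j; rewrite jt nj => /(_ isT); rewrite leq_eqVlt => /orP[/eqP e'|lt].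
    by move: jj0; rewrite (val_inj e') eqxx.
  by move: (cj lt); rewrite (negPf nj0).
rewrite (bigD1 j0) //= big1 ?adde0; first by rewrite first_j0 // eqxx.
by move=> j /andP[jt jj0]; rewrite first_j0 // (negPf jj0).
Qed.

Section Monomial.
Variable R : realType.
Implicit Types (x : 'I_K -> R) (n : state).

Lemma monomial_incr x n j : monomial x (incr n j) = x j * monomial x n.
Proof.
rewrite /monomial (bigD1 j) //= [in RHS](bigD1 j) //= incrE eqxx exprS -mulrA.
by congr (_ * (_ * _)); apply: eq_bigr => i ij; rewrite incrE (negPf ij).
Qed.

Lemma monomial_state0 x : monomial x state0 = 1.
Proof. by rewrite /monomial big1 // => i _; rewrite ffunE expr0. Qed.

Lemma monomial_ge0 x n : (forall i, 0 <= x i) -> 0 <= monomial x n.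
Proof. by move=> h; rewrite /monomial prodr_ge0 // => i _; rewrite exprn_ge0. Qed.

Lemma monomial_le1 x n : (forall i, 0 <= x i <= 1) -> monomial x n <= 1.
Proof.
move=> h; rewrite /monomial prodr_ile1 // => i _; have /andP[h0 h1] := h i.
by rewrite exprn_ge0 // exprn_ile1.
Qed.

Lemma esum_incr (j : 'I_K) (F : state -> \bar R) (Q : pred state) :
  esum [set: state] (fun n => if (n j != 0%N) && Q n then F n else 0%E) =
  esum [set: state] (fun m => if Q (incr m j) then F (incr m j) else 0%E).
Proof.
transitivity (esum [set n : state | n j != 0%N] (fun n => if Q n then F n else 0%E)).
  rewrite [RHS]esum_mkcond; apply: eq_esum => n _ /=.
  have -> : (n \in [set n1 : state | n1 j != 0%N]) = (n j != 0%N).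
    by apply/idP/idP => [/set_mem|/mem_set].
  by case: (n j != 0%N).
rewrite (reindex_esum [set: state] [set n : state | n j != 0%N] (fun m => incr m j)) //.
split.
- by move=> m _ /=; rewrite incrE eqxx.
- by move=> m1 m2 _ _; apply: incr_inj.
- by move=> n /= nj; exists (decr n j) => //; apply: incr_decr.
Qed.

End Monomial.
End States.
Arguments state0 {K}.

Section Recurrence.
Variable R : realType.

(* The component along the root [zp >= 1] grows at least geometrically, which the
   summability of [g] forbids. *)
Lemma summable_recurrence_geometric (g : nat -> R) (zp zm : R) :
  1 <= zp ->
  (forall a, g a.+2 = (zp + zm) * g a.+1 - zp * zm * g a) ->
  (forall a, 0 <= g a) -> (forall N, \sum_(a < N) g a <= 1) ->
  forall a, g a = zm ^+ a * g 0%N.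
Proof.
move=> zp1 rec g0 gsum.
pose h a := g a.+1 - zm * g a.
have hS a : h a.+1 = zp * h a by rewrite /h rec; ring.
have hE a : h a = zp ^+ a * h 0%N.
  by elim: a => [|a IH]; rewrite ?expr0 ?mul1r // hS IH exprS mulrA.
have h_grows a : `|h 0%N| <= `|h a|.
  rewrite (hE a) normrM; apply: ler_peMl => //; rewrite normrX exprn_ege1 //.
  by rewrite (le_trans zp1) // ler_norm.
have h_le a : `|h a| <= g a.+1 + `|zm| * g a.
  by rewrite /h (le_trans (ler_normB _ _)) // normrM !(ger0_norm (g0 _)).
have h_bounded N : N%:R * `|h 0%N| <= 1 + `|zm|.
  have -> : N%:R * `|h 0%N| = \sum_(a < N) `|h 0%N| by rewrite sumr_const card_ord mulr_natl.
  apply: (le_trans (y := \sum_(a < N) (g a.+1 + `|zm| * g a))).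
    by apply: ler_sum => a _; apply: le_trans (h_grows a) (h_le a).
  rewrite big_split /= -mulr_sumr; apply: lerD; last by rewrite ler_piMr ?gsum.
  have := gsum N.+1; rewrite big_ord_recl; have := g0 0%N; lra.
have h0 : h 0%N = 0.
  apply/eqP/negPn/negP => h0; have h0_gt0 : 0 < `|h 0%N| by rewrite normr_gt0.
  have := h_bounded (Num.truncn ((1 + `|zm|) / `|h 0%N|)).+1.
  have := truncnS_gt ((1 + `|zm|) / `|h 0%N|).
  by rewrite ltr_pdivrMr // => /lt_geF ->.
elim=> [|a IH]; first by rewrite expr0 mul1r.
have /eqP := hE a; rewrite h0 mulr0 subr_eq0 => /eqP ->.
by rewrite IH exprS mulrA.
Qed.

Section QuadraticRoots.
Variables b s : R.
Let d := Num.sqrt (b ^+ 2 - 4 * s).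

Lemma sqrt_roots_add : (b + d) / 2 + (b - d) / 2 = b.
Proof. by field. Qed.

Lemma sqrt_roots_mul : 0 <= b ^+ 2 - 4 * s -> (b + d) / 2 * ((b - d) / 2) = s.
Proof.
move=> D0; have dd : d ^+ 2 = b ^+ 2 - 4 * s by rewrite sqr_sqrtr.
have -> : (b + d) / 2 * ((b - d) / 2) = (b ^+ 2 - d ^+ 2) / 4 by field.
by rewrite dd; field.
Qed.

Lemma sqrt_root_ge1 : 0 <= s -> 1 + s <= b -> 1 <= (b + d) / 2.
Proof.
move=> s0 sb; have d0 : 0 <= d by rewrite sqrtr_ge0.
case: (lerP 2 b) => b2; first lra.
have D0 : 0 <= b ^+ 2 - 4 * s by nra.
suff : (2 - b) ^+ 2 <= d ^+ 2 by rewrite ler_pXn2r ?nnegrE //; lra.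
by rewrite sqr_sqrtr //; nra.
Qed.

End QuadraticRoots.
End Recurrence.

Section Slices.
Variables (R : realType) (K : nat) (r : nat -> R).
Local Notation state := {ffun 'I_K -> nat}.
Variable P : state -> R.
Hypothesis rpos : forall k, (1 <= k <= K)%N -> 0 < r k.
Hypothesis P_ge0 : forall n, 0 <= P n.
Hypothesis P_sum1 : esum [set: state] (fun n => (P n)%:E) = 1%E.
Hypothesis P_balance : balance r P.

Lemma r_gt0 (j : 'I_K) : 0 < r j.+1.
Proof. by apply: rpos; rewrite ltn_ord. Qed.

Lemma sigma_ge0 t : (t <= K)%N -> 0 <= sigma r t.
Proof.
move=> tK; rewrite /sigma big_nat_cond sumr_ge0 // => i /andP[/andP[i1 it] _].
by rewrite ltW // rpos // i1 /=; lia.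
Qed.

Section FixedWeights.
Variables (x : 'I_K -> R) (t : nat).
Hypothesis x01 : forall i, 0 <= x i <= 1.
Hypothesis x_prefix : forall i : 'I_K, (i < t)%N -> x i = 1.

Let x_ge0 i : 0 <= x i. Proof. by case/andP: (x01 i). Qed.
Let Px_ge0 n : 0 <= P n * monomial x n.
Proof. by rewrite mulr_ge0 // monomial_ge0. Qed.

Definition sliceE a : \bar R :=
  esum [set: state] (fun n => if prefix_size t n == a then (P n * monomial x n)%:E else 0%E).

Let esum_Px_ge0_le1 (Q : pred state) :
  (0 <= esum [set: state] (fun n => if Q n then (P n * monomial x n)%:E else 0%E) <= 1)%E.
Proof.
apply/andP; split; first by apply: esum_ge0 => n _; case: (Q n); rewrite // lee_fin.
rewrite -P_sum1; apply: le_esum => n _; case: (Q n); rewrite lee_fin //.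
by rewrite ler_piMr // monomial_le1.
Qed.

Definition slice a : R := fine (sliceE a).

Lemma sliceEE a : sliceE a = (slice a)%:E.
Proof.
have /andP[h0 h1] := esum_Px_ge0_le1 (fun n => prefix_size t n == a).
by rewrite /slice fineK // ge0_fin_numE // (le_lt_trans h1) // ltry.
Qed.

Lemma slice_ge0 a : 0 <= slice a.
Proof.
have /andP[h0 _] := esum_Px_ge0_le1 (fun n => prefix_size t n == a).
by rewrite -lee_fin -sliceEE.
Qed.

Lemma slice_partial_sum_le1 N : \sum_(a < N) slice a <= 1.
Proof.
rewrite -lee_fin -sumEFin; under eq_bigr do rewrite -sliceEE.
rewrite /sliceE -esum_sum; last by move=> n a _ _; case: ifP; rewrite // lee_fin.
rewrite -P_sum1; apply: le_esum => n _; case: (ltnP (prefix_size t n) N) => h.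
  rewrite (bigD1 (Ordinal h)) //= eqxx big1 ?adde0; last first.
    by move=> a /eqP ah; case: eqP => // e; case: ah; apply: val_inj.
  by rewrite lee_fin ler_piMr // monomial_le1.
rewrite big1 ?lee_fin //; move=> a _; case: eqP => // e.
by move: (ltn_ord a); rewrite -e ltnNge h.
Qed.

Definition empty_term a n : \bar R :=
  if prefix_size t n == a then
    ((if [forall i, n i == 0%N] then P n else 0) * monomial x n)%:E
  else 0%E.
Definition arrival_term a (j : 'I_K) n : \bar R :=
  if prefix_size t n == a then
    (r j.+1 * (if n j == 0%N then 0 else P (decr n j)) * monomial x n)%:E
  else 0%E.
Definition service_term a (j : 'I_K) n : \bar R :=
  if prefix_size t n == a then
    ((if lower_empty n j then P (incr n j) else 0) * monomial x n)%:E
  else 0%E.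

Let empty_term_ge0 a n : (0 <= empty_term a n)%E.
Proof.
by rewrite /empty_term; case: ifP; rewrite // lee_fin mulr_ge0 ?monomial_ge0 //; case: ifP.
Qed.
Let arrival_term_ge0 a j n : (0 <= arrival_term a j n)%E.
Proof.
rewrite /arrival_term; case: ifP; rewrite // lee_fin !mulr_ge0 ?monomial_ge0 //.
  exact: ltW (r_gt0 j).
by case: ifP.
Qed.
Let service_term_ge0 a j n : (0 <= service_term a j n)%E.
Proof.
by rewrite /service_term; case: ifP; rewrite // lee_fin mulr_ge0 ?monomial_ge0 //; case: ifP.
Qed.

Lemma sliceE_balance a : ((1 + sigma r K)%:E * sliceE a)%E =
  (esum [set: state] (empty_term a) + \sum_(j < K) esum [set: state] (arrival_term a j)
   + \sum_(j < K) esum [set: state] (service_term a j))%E.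
Proof.
rewrite /sliceE -esumZl; first last.
- by move=> n; case: ifP; rewrite // lee_fin.
- by rewrite addr_ge0 // sigma_ge0.
rewrite -!esum_sum; [|by move=> *; apply: service_term_ge0|by move=> *; apply: arrival_term_ge0].
rewrite -!esumD; last 4 first.
- move=> n _; rewrite adde_ge0 ?sume_ge0 // => [|j _].
    exact: empty_term_ge0.
  exact: arrival_term_ge0.
- by move=> n _; rewrite sume_ge0 // => j _; exact: service_term_ge0.
- by move=> n _; exact: empty_term_ge0.
- by move=> n _; rewrite sume_ge0 // => j _; exact: arrival_term_ge0.
apply: eq_esum => n _; rewrite /empty_term /arrival_term /service_term.
case: (prefix_size t n == a) => /=; last by rewrite mule0 !big1 ?adde0.
rewrite -EFinM !sumEFin -!EFinD; congr EFin.
rewrite mulrA P_balance mulrDl big_distrl /=.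
under eq_bigr do rewrite mulrDl.
by rewrite big_split /= addrA.
Qed.

Lemma esum_empty_term a :
  esum [set: state] (empty_term a) = if a == 0%N then (P state0)%:E else 0%E.
Proof.
set e := (if a == 0%N then _ else _).
transitivity (esum [set: state] (fun n => if n == state0 then e else 0%E)); last first.
  by rewrite esum_delta // /e; case: ifP; rewrite // lee_fin.
apply: eq_esum => n _; rewrite /empty_term all0_state0.
case: (eqVneq n state0) => [->|_]; last by case: ifP; rewrite // mul0r.
by rewrite prefix_size_state0 monomial_state0 mulr1 eq_sym /e.
Qed.

Lemma esum_arrival_term a (j : 'I_K) : esum [set: state] (arrival_term a j) =
  ((r j.+1 * x j)%:E * esum [set: state] (fun m =>
      if (prefix_size t m + (j < t) == a)%N then (P m * monomial x m)%:E else 0%E))%E.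
Proof.
transitivity (esum [set: state] (fun n => if (n j != 0%N) && (prefix_size t n == a)
   then (r j.+1 * P (decr n j) * monomial x n)%:E else 0%E)).
  apply: eq_esum => n _; rewrite /arrival_term.
  by case: (prefix_size t n == a); case: (n j == 0%N); rewrite //= mulr0 mul0r.
rewrite esum_incr -esumZl; first last.
- by move=> m; case: ifP; rewrite // lee_fin.
- by rewrite mulr_ge0 // ltW ?r_gt0.
apply: eq_esum => m _; rewrite decr_incr prefix_size_incr monomial_incr.
case: ifP => _; last by rewrite mule0.
by rewrite -EFinM; congr EFin; ring.
Qed.

Lemma esum_arrival_prefix a (j : 'I_K) : (j < t)%N -> esum [set: state] (arrival_term a j) =
  if a is a'.+1 then ((r j.+1)%:E * sliceE a')%E else 0%E.
Proof.
move=> jt; rewrite esum_arrival_term jt /= x_prefix // mulr1; case: a => [|a].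
  by rewrite esum1 ?mule0 // => m _; rewrite addn1.
by congr (_ * _)%E; apply: eq_esum => m _; rewrite addn1 eqSS.
Qed.

Lemma esum_arrival_suffix a (j : 'I_K) : (t <= j)%N ->
  esum [set: state] (arrival_term a j) = ((r j.+1 * x j)%:E * sliceE a)%E.
Proof.
move=> tj; rewrite esum_arrival_term ltnNge tj /=.
by congr (_ * _)%E; apply: eq_esum => m _; rewrite addn0.
Qed.

Lemma esum_service_prefix a (j : 'I_K) : (j < t)%N -> esum [set: state] (service_term a j) =
  esum [set: state] (fun n => if (prefix_size t n == a.+1) && ((n j != 0%N) && lower_empty n j)
     then (P n * monomial x n)%:E else 0%E).
Proof.
move=> jt.
transitivity (esum [set: state] (fun m =>
   if (fun n => (prefix_size t (decr n j) == a) && lower_empty (decr n j) j) (incr m j)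
   then (fun n => (P n * monomial x (decr n j))%:E) (incr m j) else 0%E)).
  apply: eq_esum => m _ /=; rewrite decr_incr /service_term.
  by case: (prefix_size t m == a); case: (lower_empty m j); rewrite //= mul0r.
rewrite -(esum_incr j (fun n => (P n * monomial x (decr n j))%:E)
           (fun n => (prefix_size t (decr n j) == a) && lower_empty (decr n j) j)).
apply: eq_esum => n _; case: (boolP (n j != 0%N)) => nj /=; last by rewrite andbF.
have [m ->] : exists m, n = incr m j by exists (decr n j); rewrite incr_decr.
rewrite decr_incr prefix_size_incr jt /= addn1 eqSS lower_empty_incr.
by rewrite monomial_incr x_prefix // mul1r.
Qed.

(* A departure from a prefix level leaves the prefix size one smaller. *)
Lemma sum_service_prefix a :
  (\sum_(j < K | (j < t)%N) esum [set: state] (service_term a j))%E = sliceE a.+1.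
Proof.
rewrite (eq_bigr _ (fun j => esum_service_prefix a (j:=j))).
rewrite -esum_sum; last by move=> n j _ _; case: ifP; rewrite // lee_fin.
apply: eq_esum => n _; case: (eqVneq (prefix_size t n) a.+1) => h /=.
  by rewrite sum_first_occupied // h.
by rewrite big1.
Qed.

Lemma esum_service_suffix a (j : 'I_K) : (t <= j)%N ->
  esum [set: state] (service_term a.+1 j) = 0%E.
Proof.
move=> tj; apply: esum1 => n _; rewrite /service_term; case: eqP => // h.
have [i it ni] : exists2 i : 'I_K, (i < t)%N & n i != 0%N by apply: prefix_size_neq0; rewrite h.
suff -> : lower_empty n j = false by rewrite mul0r.
apply/negbTE/negP => /forallP/(_ i)/implyP; rewrite (leq_trans it tj) => /(_ isT).
by rewrite (negPf ni).
Qed.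

Definition prefix_rate : R := \sum_(j < K | (j < t)%N) r j.+1.
Definition suffix_rate : R := \sum_(j < K | ~~ (j < t)%N) r j.+1 * x j.

Lemma sum_arrival_term a : (\sum_(j < K) esum [set: state] (arrival_term a j))%E =
  ((if a is a'.+1 then prefix_rate * slice a' else 0) + suffix_rate * slice a)%:E.
Proof.
rewrite (bigID (fun j : 'I_K => (j < t)%N)) /=.
rewrite (eq_bigr (fun j : 'I_K => ((if a is a'.+1 then r j.+1 * slice a' else 0))%:E)); last first.
  by move=> j jt; rewrite esum_arrival_prefix //; case: a => [|a] //; rewrite sliceEE.
rewrite [X in (_ + X)%E](eq_bigr (fun j : 'I_K => (r j.+1 * x j * slice a)%:E)); last first.
  by move=> j jt; rewrite esum_arrival_suffix ?sliceEE // leqNgt.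
rewrite !sumEFin -EFinD /suffix_rate -big_distrl; congr (_ + _)%:E.
by case: a => [|a]; [rewrite big1 | rewrite /prefix_rate big_distrl].
Qed.

Lemma slice_recurrence a :
  (1 + sigma r K) * slice a.+1 = prefix_rate * slice a + suffix_rate * slice a.+1 + slice a.+2.
Proof.
apply: EFin_inj; rewrite EFinM -sliceEE sliceE_balance esum_empty_term /= add0e.
rewrite sum_arrival_term (bigID (fun j : 'I_K => (j < t)%N)) /= sum_service_prefix.
rewrite big1 ?adde0 ?sliceEE -?EFinD // => j jt.
by apply: esum_service_suffix; rewrite leqNgt.
Qed.

Definition suffix_service0 : \bar R :=
  (\sum_(j < K | ~~ (j < t)%N) esum [set: state] (service_term 0%N j))%E.

Lemma suffix_service0E : suffix_service0 =
  ((1 + sigma r K) * slice 0%N - P state0 - suffix_rate * slice 0%N - slice 1%N)%:E.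
Proof.
have := sliceE_balance 0%N; rewrite esum_empty_term sum_arrival_term /= add0r.
rewrite (bigID (fun j : 'I_K => (j < t)%N)) /= sum_service_prefix -/suffix_service0.
rewrite !sliceEE; case: suffix_service0 => [d||] //= [->].
by congr EFin; lra.
Qed.

End FixedWeights.

Variable z : nat -> R.
Hypothesis z01 : forall k, (1 <= k < K)%N -> 0 <= z k < 1.

(* Levels [1..t] are summed out, level [i+1 > t] is paired with [z_(K-i)] as in [Gfun]. *)
Definition weights t (i : 'I_K) : R := if (i < t)%N then 1 else z (K - i).

Lemma weights01 t : (1 <= t)%N -> forall i, 0 <= weights t i <= 1.
Proof.
move=> t1 i; rewrite /weights; case: ifP => it; first by rewrite ler01 lexx.
have /andP[-> /ltW ->] // : 0 <= z (K - i) < 1.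
by apply: z01; have := ltn_ord i; move: it t1 => /negbT; rewrite -leqNgt; lia.
Qed.

Lemma weights_prefix t (i : 'I_K) : (i < t)%N -> weights t i = 1.
Proof. by rewrite /weights => ->. Qed.

Local Notation g t := (slice (weights t) t).
Local Notation zp t := (zeta_plus r K z (K - t)).
Local Notation zm t := (zeta_minus r K z (K - t)).

Lemma prefix_rate_sigma t : (t <= K)%N -> prefix_rate t = sigma r t.
Proof.
move=> tK; rewrite /prefix_rate /sigma big_add1 /= big_mkord.
by rewrite (big_ord_widen _ (fun j => r j.+1) tK).
Qed.

Lemma sigma_split t : sigma r K = prefix_rate t + \sum_(j < K | ~~ (j < t)%N) r j.+1.
Proof.
rewrite -(prefix_rate_sigma (leqnn K)) /prefix_rate (bigID (fun j : 'I_K => (j < t)%N)) /=.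
by congr (_ + _); apply: eq_bigl => j; rewrite ltn_ord.
Qed.

Lemma suffix_rate_le t : (1 <= t)%N ->
  suffix_rate (weights t) t <= \sum_(j < K | ~~ (j < t)%N) r j.+1.
Proof.
move=> t1; apply: ler_sum => j _; have /andP[_ wj1] := weights01 t1 j.
by rewrite ler_piMr // ltW ?r_gt0.
Qed.

Lemma suffix_rate_beta t : (t <= K)%N -> suffix_rate (weights t) t = beta r K z (K - t).
Proof.
move=> tK; rewrite /suffix_rate /beta big_add1 /= big_mkord.
rewrite (big_ord_widen _ (fun k => z k.+1 * r (K.+1 - k.+1)) (leq_subr t K)).
rewrite [RHS](reindex_inj rev_ord_inj) /=; apply: eq_big => j.
  by rewrite -leqNgt; have jK := ltn_ord j; apply/idP/idP => ?; lia.
move=> jt; rewrite /weights (negPf jt) mulrC; have := ltn_ord j => jK.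
by congr (z _ * r _); lia.
Qed.

Lemma zeta_slice t : (1 <= t <= K)%N ->
  [/\ zp t + zm t = 1 + sigma r K - suffix_rate (weights t) t,
      zp t * zm t = prefix_rate t & 1 <= zp t].
Proof.
move=> /andP[t1 tK].
have sigmaE : sigma r (K - (K - t)) = prefix_rate t by rewrite subKn // prefix_rate_sigma.
have bbE : bb r K z (K - t) = 1 + sigma r K - suffix_rate (weights t) t.
  by rewrite /bb suffix_rate_beta.
have p0 : 0 <= prefix_rate t by rewrite prefix_rate_sigma // sigma_ge0.
have pb : 1 + prefix_rate t <= bb r K z (K - t).
  by rewrite bbE; have := sigma_split t; have := suffix_rate_le t1; lra.
rewrite /zeta_plus /zeta_minus sigmaE -bbE sqrt_roots_add; split => //.
  apply: sqrt_roots_mul; set b := bb _ _ _ _ in pb *.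
  have : (1 + prefix_rate t) ^+ 2 <= b ^+ 2 by rewrite ler_pXn2r ?nnegrE //; lra.
  have := sqr_ge0 (1 - prefix_rate t); nra.
exact: sqrt_root_ge1.
Qed.

Lemma slice_geometric t : (1 <= t <= K)%N -> forall a, g t a = zm t ^+ a * g t 0%N.
Proof.
move=> tK; have [zsum zprod zp1] := zeta_slice tK; have /andP[t1 _] := tK.
apply: summable_recurrence_geometric zp1 _ _ _ => [a||N].
- have := slice_recurrence (weights01 t1) (@weights_prefix t) a; rewrite zsum zprod; lra.
- exact: slice_ge0 t (weights01 t1).
- exact: (slice_partial_sum_le1 t (weights01 t1) N).
Qed.

Lemma suffix_service0_zeta t : (1 <= t <= K)%N ->
  suffix_service0 (weights t) t = (zp t * g t 0%N - P state0)%:E.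
Proof.
move=> tK; have [zsum _ _] := zeta_slice tK; have /andP[t1 _] := tK.
rewrite (suffix_service0E (weights01 t1) (@weights_prefix t)); congr EFin.
rewrite (slice_geometric tK 1) expr1 (_ : zp t = 1 + sigma r K - suffix_rate (weights t) t - zm t).
  by ring.
by rewrite -zsum; ring.
Qed.

Definition next_level_service t (tK : (t < K)%N) : \bar R :=
  esum [set: state] (fun n => if prefix_size t n == 0%N then
     (P (incr n (Ordinal tK)) * monomial (weights t) n)%:E else 0%E).

Lemma monomial_weightsS t (tK : (t < K)%N) (n : state) : n (Ordinal tK) = 0%N ->
  monomial (weights t) n = monomial (weights t.+1) n.
Proof.
move=> n_t; apply: eq_bigr => i _; rewrite /weights.
case: (eqVneq i (Ordinal tK)) => [->|ne] /=; first by rewrite n_t !expr0.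
suff -> : (i < t.+1)%N = (i < t)%N by [].
by rewrite ltnS leq_eqVlt; move: ne; rewrite -val_eqE /= => /negPf ->.
Qed.

Lemma suffix_service0S t (tK : (t < K)%N) :
  suffix_service0 (weights t) t =
  (next_level_service tK + suffix_service0 (weights t.+1) t.+1)%E.
Proof.
rewrite /suffix_service0 (bigD1 (Ordinal tK)) /= ?ltnn //; congr (_ + _)%E.
  apply: eq_esum => n _; rewrite /service_term; case: eqP => // h.
  suff -> : lower_empty n (Ordinal tK) by [].
  by apply/forallP => i; apply/implyP => it; apply/eqP; exact: prefix_size_eq0 h i it.
apply: eq_big => j.
  rewrite -val_eqE /= -!leqNgt; have jK := ltn_ord j.
  by apply/idP/idP => [/andP[h1 h2]|h]; [lia | apply/andP; split; lia].
move=> /andP[jt jne]; apply: eq_esum => n _; rewrite /service_term prefix_sizeS.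
case: (boolP (lower_empty n j)) => c; last by rewrite !mul0r; case: ifP; case: ifP.
have n_t : n (Ordinal tK) = 0%N.
  apply/eqP; move/forallP: c => /(_ (Ordinal tK)) /implyP; apply => /=.
  by move: jt jne; rewrite -val_eqE /= -leqNgt => ??; lia.
by rewrite n_t addn0 (monomial_weightsS n_t).
Qed.

Lemma slice0S t (tK : (t < K)%N) : (1 <= t)%N ->
  sliceE (weights t) t 0%N =
  (sliceE (weights t.+1) t.+1 0%N + (z (K - t))%:E * next_level_service tK)%E.
Proof.
move=> t1; have Pw u n m : (1 <= u)%N -> (0 <= (P n * monomial (weights u) m)%:E)%E.
  by move=> u1; rewrite lee_fin mulr_ge0 // monomial_ge0 // => i; case/andP: (weights01 u1 i).
rewrite /sliceE; set t' := Ordinal tK.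
transitivity (esum [set: state] (fun n =>
  ((if (n t' == 0%N) && (prefix_size t n == 0%N) then (P n * monomial (weights t) n)%:E else 0%E)
  + (if (n t' != 0%N) && (prefix_size t n == 0%N) then (P n * monomial (weights t) n)%:E
     else 0%E))%E)).
  apply: eq_esum => n _.
  by case: (n t' == 0%N); case: (prefix_size t n == 0%N); rewrite /= ?adde0 ?add0e.
rewrite esumD; last 2 first.
- by move=> n _; case: ifP => _; rewrite ?Pw.
- by move=> n _; case: ifP => _; rewrite ?Pw.
congr (_ + _)%E.
  apply: eq_esum => n _; rewrite prefix_sizeS addn_eq0 andbC.
  case: (eqVneq (n t') 0%N) => h /=; last by rewrite andbF.
  by rewrite andbT (monomial_weightsS h).
rewrite esum_incr -esumZl; last 2 first.
- by have /andP[] := @z01 (K - t)%N ltac:(lia).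
- by move=> n; case: ifP => _; rewrite ?Pw.
apply: eq_esum => m _; rewrite prefix_size_incr /= ltnn addn0 monomial_incr.
have -> : weights t t' = z (K - t) by rewrite /weights /= ltnn.
case: ifP => _; last by rewrite mule0.
by rewrite -EFinM; congr EFin; ring.
Qed.

(* The departures from the levels above [t+1] cancel between the slice-0 balances
   for [t] and for [t+1]. *)
Lemma slice0_step t : (1 <= t)%N -> (t < K)%N ->
  g t 0%N * (1 - z (K - t) * zp t) = g t.+1 0%N * (1 - z (K - t) * zp t.+1).
Proof.
move=> t1 tK; have tK' : (1 <= t <= K)%N by rewrite t1 ltnW.
have t1K : (1 <= t.+1 <= K)%N by rewrite tK.
have := suffix_service0S tK; rewrite !suffix_service0_zeta //.
have := slice0S tK t1; rewrite !(sliceEE _ (weights01 _)) //.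
case: (next_level_service tK) => [s||] //= [slice0E] [service0E].
have {}service0E : s = zp t * g t 0%N - zp t.+1 * g t.+1 0%N by lra.
rewrite service0E in slice0E; lra.
Qed.

Hypothesis K_gt0 : (0 < K)%N.

Lemma sliceK0 : g K 0%N = P state0.
Proof.
apply: EFin_inj; rewrite -(sliceEE _ (weights01 K_gt0)).
rewrite -(esum_delta (@state0 K) (e := (P state0)%:E)) ?lee_fin //.
apply: eq_esum => n _; case: (eqVneq n state0) => [->|n_ne0].
  by rewrite prefix_size_state0 monomial_state0 mulr1.
case: eqP => // /prefix_size_eq0 n0; case/eqP: n_ne0.
by apply/ffunP => i; rewrite ffunE n0.
Qed.

Lemma Gfun_slice1 l : Gfun P z l = (g 1%N l)%:E.
Proof.
rewrite /Gfun -(sliceEE _ (weights01 (leqnn 1))) /sliceE esum_mkcond.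
apply: eq_esum => n _.
have size1 : prefix_size 1 n = n (Ordinal K_gt0).
  rewrite /prefix_size (bigD1 (Ordinal K_gt0)) //= big1 ?addn0 // => i /andP[i1 ne].
  by move: i1 ne; rewrite ltnS leqn0 -val_eqE /= => /eqP ->.
have -> : (n \in [set u : state | lev u 1 = l]) = (prefix_size 1 n == l).
  rewrite size1 -(lev_ord n (Ordinal K_gt0)).
  by apply/idP/idP => [/set_mem/eqP|/eqP/mem_set].
congr (if _ then _ else _); congr (_ * _)%:E.
rewrite big_add1 /= big_geq_mkord /monomial [RHS](bigID (fun i : 'I_K => (1 <= i)%N)) /=.
rewrite [X in _ = _ * X]big1 ?mulr1 => [|i]; last first.
  by rewrite -ltnNge ltnS leqn0 => /eqP i0; rewrite /weights i0 expr1n.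
by apply: eq_bigr => i i1; rewrite lev_ord /weights ltnNge i1 subSS.
Qed.

Hypothesis sigma_lt1 : sigma r K < 1.

Lemma zeta_minus0 : zeta_minus r K z 0 = sigma r K.
Proof.
rewrite /zeta_minus /bb /beta big_geq // subr0 subn0.
rewrite (_ : (1 + sigma r K) ^+ 2 - 4 * sigma r K = (1 - sigma r K) ^+ 2); last by ring.
by rewrite sqrtr_sqr ger0_norm ?subr_ge0 ?ltW //; field.
Qed.

Lemma sliceK_geometric a : g K a = P state0 * sigma r K ^+ a.
Proof.
have KK : (1 <= K <= K)%N by rewrite K_gt0 leqnn.
by rewrite (slice_geometric KK) subnn zeta_minus0 sliceK0 mulrC.
Qed.

(* Slice [K] is the marginal law of the total queue length. *)
Lemma esum_P_slicesK :
  esum [set: state] (fun n => (P n)%:E) = (\sum_(0 <= a <oo) (g K a)%:E)%E.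
Proof.
rewrite nneseries_esumT => [|a]; last by rewrite lee_fin (slice_ge0 _ (weights01 K_gt0)).
have -> : [set: state] = \bigcup_(a in [set: nat]) [set n : state | prefix_size K n = a].
  by apply/seteqP; split => n // _; exists (prefix_size K n).
rewrite esum_bigcupT => [|a b _ _ [n [/= <- <-]]|n]; rewrite ?lee_fin //.
apply: eq_esum => a _; rewrite -(sliceEE _ (weights01 K_gt0)) /sliceE esum_mkcond.
apply: eq_esum => n _; rewrite /monomial big1 ?mulr1 => [|i _]; last first.
  by rewrite /weights ltn_ord expr1n.
have -> // : (n \in [set u : state | prefix_size K u = a]) = (prefix_size K n == a).
by apply/idP/idP => [/set_mem/eqP|/eqP/mem_set].
Qed.

Lemma P_state0 : P state0 = 1 - sigma r K.
Proof.
have sigma_norm : `|sigma r K| < 1 by rewrite ger0_norm // sigma_ge0.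
have : (\sum_(0 <= a <oo) (g K a)%:E)%E = (P state0 / (1 - sigma r K))%:E.
  transitivity (limn (EFin \o series (geometric (P state0) (sigma r K)))).
    congr (limn _); apply/funext => N /=; rewrite /series /= -sumEFin.
    by apply: eq_bigr => a _; rewrite sliceK_geometric.
  rewrite EFin_lim; last exact: is_cvg_geometric_series.
  by congr EFin; exact: cvg_lim (cvg_geometric_series (a := P state0) sigma_norm).
rewrite -esum_P_slicesK P_sum1 => -[/(congr1 ( *%R^~ (1 - sigma r K)))].
by rewrite mul1r divfK // subr_eq0 gt_eqF.
Qed.

Hypothesis zeta_den_neq0 : forall k, (1 <= k < K)%N -> 1 - z k * zeta_plus r K z k != 0.

Lemma slice0_prod k : (k < K)%N -> g (K - k) 0%N = (1 - sigma r K) *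
  \prod_(1 <= k' < k.+1) ((1 - z k' * zeta_plus r K z k'.-1) / (1 - z k' * zeta_plus r K z k')).
Proof.
elim: k => [|k IH] kK; first by rewrite subn0 sliceK0 P_state0 big_geq // mulr1.
rewrite big_nat_recr //= mulrA -IH; last by lia.
have e1 : (K - (K - k.+1) = k.+1)%N by lia.
have e2 : (K - (K - k.+1).+1 = k)%N by lia.
have e3 : ((K - k.+1).+1 = K - k)%N by lia.
have := @slice0_step (K - k.+1)%N ltac:(lia) ltac:(lia); rewrite e1 e2 e3 => step.
by rewrite mulrA -step mulfK // zeta_den_neq0 //; lia.
Qed.

End Slices.

Theorem mainTheorem2 (R : realType) (K : nat) (r : nat -> R)
    (P : {ffun 'I_K -> nat} -> R) (l : nat) (z : nat -> R) :
  (2 <= K)%N ->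
  (forall k, (1 <= k <= K)%N -> 0 < r k) ->
  sigma r K < 1 ->
  (forall n, 0 <= P n) ->
  esum [set: {ffun 'I_K -> nat}] (fun n => (P n)%:E) = 1%E ->
  balance r P ->
  (forall k, (1 <= k < K)%N -> 0 <= z k < 1) ->
  (forall k, (1 <= k < K)%N -> 1 - z k * zeta_plus r K z k != 0) ->
  Gfun P z l =
    ((1 - sigma r K) * zeta_minus r K z K.-1 ^+ l
     * \prod_(1 <= k < K)
         ((1 - z k * zeta_plus r K z k.-1) / (1 - z k * zeta_plus r K z k)))%:E.
Proof.
move=> K2 rpos sigma_lt1 P_ge0 P_sum1 P_balance z01 zeta_den_neq0.
have K_gt0 : (0 < K)%N by lia.
have slice1 : (1 <= 1 <= K)%N by rewrite K_gt0.
rewrite (Gfun_slice1 P_ge0 P_sum1 z01 K_gt0).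
rewrite (slice_geometric rpos P_ge0 P_sum1 P_balance z01 slice1).
have Kpred_lt : (K.-1 < K)%N by rewrite ltn_predL.
have := slice0_prod rpos P_ge0 P_sum1 P_balance z01 K_gt0 sigma_lt1 zeta_den_neq0 Kpred_lt.
rewrite prednK // subn1 (_ : K - K.-1 = 1)%N => [->|]; last by lia.
by congr EFin; ring.
Qed.
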